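(* Let $\ell$ be a label, $A,B$ types and $\rho_{11},\rho_{12},\rho_{21},\rho_{22}$ rows such that all concatenations below are defined. If $A \simeq B$, $\rho_{11}\odot\rho_{12} \simeq \rho_{21}\odot\rho_{22}$ and $\ell \notin \mathit{dom}(\rho_{11})\cup\mathit{dom}(\rho_{21})$, then $\rho_{11}\odot(\ell{:}A;\cdot)\odot\rho_{12} \simeq \rho_{21}\odot(\ell{:}B;\cdot)\odot\rho_{22}$.
   Context: Types and rows share one grammar: $A,B,C,\rho ::= X \mid \alpha \mid \star \mid \iota \mid A\to B \mid \forall X{:}K.\,A \mid [\rho] \mid \langle\rho\rangle \mid \cdot \mid \ell{:}A;\rho$, where $X$ ranges over type variables (bound by $\forall$), $\alpha$ over type names, $\star$ is the dynamic type (also serving as the dynamic row), $\iota$ over base types, $[\rho]$ and $\langle\rho\rangle$ are record and variant types, $\cdot$ is the empty row, $\ell$ ranges over labels, and $K\in\{\mathsf T,\mathsf R\}$ is a kind. Types are identified up to renaming of bound variables; $\mathit{ftv}(A)$ is the set of free type variables. Row matching $\rho \triangleright_\ell A,\rho'$ is defined by: $(\ell{:}A;\rho)\triangleright_\ell A,\rho$; if $\ell'\neq\ell$ and $\rho\triangleright_\ell A,\rho'$ then $(\ell'{:}B;\rho)\triangleright_\ell A,(\ell'{:}B;\rho')$; and $\star\triangleright_\ell \star,\star$. $\mathbf{QPoly}(A)$ holds iff $A$ is not of the form $\forall X{:}K.\,B$ and $\star$ occurs in $A$. Row concatenation $\rho_1\odot\rho_2$ is defined only when $\rho_1=\ell_1{:}A_1;\dots;\ell_n{:}A_n;\cdot$,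 and then equals $\ell_1{:}A_1;\dots;\ell_n{:}A_n;\rho_2$. $\mathit{dom}(\rho)$ is the set of labels in the top-level label prefix of $\rho$. Consistency $\simeq$ is defined inductively: $A\simeq A$; $\star\simeq A$; $A\simeq\star$; $A_1\to A_2\simeq B_1\to B_2$ if $A_1\simeq B_1$ and $A_2\simeq B_2$; $\forall X{:}K.A\simeq\forall X{:}K.B$ if $A\simeq B$; $\forall X{:}K.A\simeq B$ if $\mathbf{QPoly}(B)$, $X\notin\mathit{ftv}(B)$ and $A\simeq B$; $A\simeq\forall X{:}K.B$ if $\mathbf{QPoly}(A)$, $X\notin\mathit{ftv}(A)$ and $A\simeq B$; $[\rho_1]\simeq[\rho_2]$ and $\langle\rho_1\rangle\simeq\langle\rho_2\rangle$ if $\rho_1\simeq\rho_2$; $\ell{:}A;\rho_1\simeq B$ if $B\triangleright_\ell B',\rho_2$, $A\simeq B'$ and $\rho_1\simeq\rho_2$; $A\simeq \ell{:}B;\rho_2$ if $A\triangleright_\ell A',\rho_1$, $A'\simeq B$ and $\rho_1\simeq\rho_2$. *)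

(* Types and rows of a gradual polymorphic calculus with rows,
   with bound type variables in de Bruijn representation (so types are
   identified up to alpha-renaming). *)
From Stdlib Require Import List Arith.
Import ListNotations.

Definition label := nat.

Inductive kind : Type := KT | KR.

Inductive ty : Type :=
| TVar   : nat -> ty          (* type variable X (de Bruijn index) *)
| TName  : nat -> ty
| TDyn   : ty                 (* the dynamic type / row  * *)
| TBase  : nat -> ty
| TArr   : ty -> ty -> ty
| TAll   : kind -> ty -> ty   (* forall X:K. A  (binds index 0) *)
| TRec   : ty -> ty
| TVariant : ty -> ty
| TEmpty : ty
| TExt   : label -> ty -> ty -> ty.

Fixpoint shift (c : nat) (A : ty) : ty :=
  match A with
  | TVar n => if Nat.leb c n then TVar (S n) else TVar n
  | TName a => TName a
  | TDyn => TDyn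
  | TBase i => TBase i
  | TArr A1 A2 => TArr (shift c A1) (shift c A2)
  | TAll K B => TAll K (shift (S c) B)
  | TRec r => TRec (shift c r)
  | TVariant r => TVariant (shift c r)
  | TEmpty => TEmpty
  | TExt l B r => TExt l (shift c B) (shift c r)
  end.

Fixpoint has_dyn (A : ty) : bool :=
  match A with
  | TDyn => true
  | TVar _ | TName _ | TBase _ | TEmpty => false
  | TArr A1 A2 => has_dyn A1 || has_dyn A2
  | TAll _ B => has_dyn B
  | TRec r | TVariant r => has_dyn r
  | TExt _ B r => has_dyn B || has_dyn r
  end.

Definition QPoly (A : ty) : Prop :=
  (forall K B, A <> TAll K B) /\ has_dyn A = true.

Inductive rmatch : ty -> label -> ty -> ty -> Prop :=
| rm_head : forall l A r, rmatch (TExt l A r) l A r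
| rm_skip : forall l l' A B r r', l' <> l -> rmatch r l A r' ->
    rmatch (TExt l' B r) l A (TExt l' B r')
| rm_dyn : forall l, rmatch TDyn l TDyn TDyn.

(* Consistency.  The side condition X notin ftv(B) in the quasi-polymorphic
   rules is realised in de Bruijn form by comparing the body with the
   shifted (weakened) other side. *)
Inductive consistent : ty -> ty -> Prop :=
| c_refl : forall A, consistent A A
| c_dynL : forall A, consistent TDyn A
| c_dynR : forall A, consistent A TDyn
| c_arr : forall A1 A2 B1 B2, consistent A1 B1 -> consistent A2 B2 ->
    consistent (TArr A1 A2) (TArr B1 B2)
| c_all : forall K A B, consistent A B -> consistent (TAll K A) (TAll K B)
| c_allL : forall K A B, QPoly B -> consistent A (shift 0 B) ->
    consistent (TAll K A) B
| c_allR : forall K A B, QPoly A -> consistent (shift 0 A) B ->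
    consistent A (TAll K B)
| c_rec : forall r1 r2, consistent r1 r2 -> consistent (TRec r1) (TRec r2)
| c_var : forall r1 r2, consistent r1 r2 ->
    consistent (TVariant r1) (TVariant r2)
| c_extL : forall l A r1 B B' r2, rmatch B l B' r2 -> consistent A B' ->
    consistent r1 r2 -> consistent (TExt l A r1) B
| c_extR : forall l A A' r1 B r2, rmatch A l A' r1 -> consistent A' B ->
    consistent r1 r2 -> consistent A (TExt l B r2).

Notation "A ~= B" := (consistent A B) (at level 70).

(* closed rows l1:A1;...;ln:An;.  are represented by their field lists *)
Fixpoint row_of (fs : list (label * ty)) (tail : ty) : ty :=
  match fs with
  | [] => tail
  | (l, A) :: fs' => TExt l A (row_of fs' tail)
  end.

(* row concatenation rho1 (.) rho2, defined only when rho1 is closed *)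
Fixpoint rconcat (r1 r2 : ty) : option ty :=
  match r1 with
  | TEmpty => Some r2
  | TExt l A r => option_map (TExt l A) (rconcat r r2)
  | _ => None
  end.

Fixpoint dom (r : ty) : list label :=
  match r with
  | TExt l _ r' => l :: dom r'
  | _ => []
  end.

From Stdlib Require Import List.

(* Both sides of the conclusion arise from the rows of the hypothesis by
   inserting a field [l : A] (resp. [l : B]) behind a prefix of fields with
   labels other than [l].  Such an insertion preserves consistency, by
   induction on the consistency derivation: an inserted field at the head of
   one side is absorbed by row matching ([c_extL]/[c_extR]) on the other
   side, where it was inserted as well; and matching any label other than
   [l] commutes with the insertion, so the row rules go through unchanged. *)

Inductive row_insert (l : label) (A : ty) : ty -> ty -> Prop :=
| row_insert_here : forall r, row_insert l A r (TExt l A r)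
| row_insert_skip : forall m C r r', m <> l -> row_insert l A r r' ->
    row_insert l A (TExt m C r) (TExt m C r').

Lemma rmatch_row_insert l A r r' : row_insert l A r r' -> rmatch r' l A r.
Proof. induction 1; constructor; auto. Qed.

Lemma rmatch_row_insert_other Y m C r :
  rmatch Y m C r -> forall l B Y', row_insert l B Y Y' -> m <> l ->
  exists r', rmatch Y' m C r' /\ row_insert l B r r'.
Proof.
  induction 1 as [m C r | m m' C D r r0 Hm Hmatch IH | m];
    intros l B Y' Hins Hml; inversion Hins; subst.
  - eexists; split; repeat constructor; auto.
  - eexists; split; [constructor | eassumption].
  - eexists; split; repeat constructor; auto.
  - edestruct IH as (r1 & Hr1 & Hins1); [eassumption | exact Hml |].
    exists (TExt m' D r1); split; constructor; auto.
  - eexists; split; repeat constructor; auto.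
Qed.

Lemma consistent_inserted_headL l A B X Y Y' :
  row_insert l B Y Y' -> X ~= Y -> A ~= B -> TExt l A X ~= Y'.
Proof. intros; eapply c_extL; eauto using rmatch_row_insert. Qed.

Lemma consistent_inserted_headR l A B X X' Y :
  row_insert l A X X' -> X ~= Y -> A ~= B -> X' ~= TExt l B Y.
Proof. intros; eapply c_extR; eauto using rmatch_row_insert. Qed.

(* The case [c_refl]: the two insertions into the same row may happen at
   different depths. *)
Lemma consistent_row_insert_same l A B X X' Y' :
  A ~= B -> row_insert l A X X' -> row_insert l B X Y' -> X' ~= Y'.
Proof.
  intros HAB HX; revert Y'; induction HX as [X | m C X X' Hml HX IH];
    intros Y' HY.
  - eapply consistent_inserted_headL; eauto using c_refl.
  - destruct (rmatch_row_insert_other _ _ _ _ (rm_head m C X) _ _ _ HY Hml)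
      as (r' & Hmatch & Hins).
    eapply c_extL; eauto using c_refl.
Qed.

Lemma consistent_row_insert l A B X Y X' Y' :
  A ~= B -> X ~= Y -> row_insert l A X X' -> row_insert l B Y Y' -> X' ~= Y'.
Proof.
  intros HAB H; revert X' Y'; induction H; intros X' Y' HX HY.
  - eapply consistent_row_insert_same; eauto.
  - inversion HX; subst; eauto using consistent_inserted_headL, c_dynL.
  - inversion HY; subst; eauto using consistent_inserted_headR, c_dynR.
  - inversion HX; subst; eauto using consistent_inserted_headL, c_arr.
  - inversion HX; subst; eauto using consistent_inserted_headL, c_all.
  - inversion HX; subst; eauto using consistent_inserted_headL, c_allL.
  - inversion HY; subst; eauto using consistent_inserted_headR, c_allR.
  - inversion HX; subst; eauto using consistent_inserted_headL, c_rec.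
  - inversion HX; subst; eauto using consistent_inserted_headL, c_var.
  - inversion HX; subst.
    + eauto using consistent_inserted_headL, c_extL.
    + inversion HY; subst.
      * eauto using consistent_inserted_headR, c_extL.
      * edestruct rmatch_row_insert_other as (s & Hmatch & Hins);
          [eassumption | exact HY | assumption | eapply c_extL; eauto].
  - inversion HY; subst.
    + eauto using consistent_inserted_headR, c_extR.
    + inversion HX; subst.
      * eauto using consistent_inserted_headL, c_extR.
      * edestruct rmatch_row_insert_other as (s & Hmatch & Hins);
          [eassumption | exact HX | assumption | eapply c_extR; eauto].
Qed.

Lemma rconcat_row_insert l A r1 r2 c d e :
  rconcat r1 r2 = Some c ->
  rconcat r1 (TExt l A TEmpty) = Some d ->
  rconcat d r2 = Some e ->
  ~ In l (dom r1) -> row_insert l A c e.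
Proof.
  revert c d e; induction r1 as [| | | | | | | | | m C _ r1 IH];
    intros c d e Hc Hd He Hl; simpl in *; try discriminate.
  - injection Hc as <-; injection Hd as <-; injection He as <-.
    constructor.
  - destruct (rconcat r1 r2) as [c'|] eqn:Hc'; try discriminate.
    destruct (rconcat r1 (TExt l A TEmpty)) as [d'|] eqn:Hd'; try discriminate.
    injection Hc as <-; injection Hd as <-; simpl in He.
    destruct (rconcat d' r2) as [e'|] eqn:He'; try discriminate.
    injection He as <-.
    constructor; eauto.
Qed.

Theorem mainTheorem10 :
  forall (l : label) (A B r11 r12 r21 r22 c1 c2 d1 d2 : ty),
    (* concatenations are defined *)
    rconcat r11 r12 = Some c1 ->
    rconcat r21 r22 = Some c2 ->
    rconcat r11 (TExt l A TEmpty) = Some d1 ->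
    rconcat r21 (TExt l B TEmpty) = Some d2 ->
    A ~= B ->
    c1 ~= c2 ->
    ~ In l (dom r11) -> ~ In l (dom r21) ->
    forall e1 e2,
      rconcat d1 r12 = Some e1 ->
      rconcat d2 r22 = Some e2 ->
      e1 ~= e2.
Proof.
  intros l A B r11 r12 r21 r22 c1 c2 d1 d2 Hc1 Hc2 Hd1 Hd2 HAB Hc Hl1 Hl2
    e1 e2 He1 He2.
  apply (consistent_row_insert l A B c1 c2); eauto using rconcat_row_insert.
Qed.
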